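(* Let $R$ be a commutative noetherian semilocal ring with Jacobson radical $J$ which is $J$-adically complete. Let $\mathscr{M}$ be a $\mathcal{B}$-diagram in the category of $R$-modules such that $\mathscr{M}(\sigma)$ is finitely generated and $\mathrm{im}(\mathscr{M}(\mho_\sigma))\subseteq\ker(\mathscr{M}(\Omega_\sigma))$ for every vertex $\sigma$ of $\mathcal{B}$. If $0\neq m\in\mathscr{M}(\emptyset)$, then there exists a ray $\overline{\sigma}=(\sigma^i)$ in $\mathcal{B}$ such that exactly one of the following holds: (1) there exists $j\in\mathbb{N}$ such that $m\in\widetilde{\mu}_{\leq j}\ker(\mathscr{M}(\Omega_{\sigma^j}))\setminus\widetilde{\mu}_{\leq j}\,\mathrm{im}(\mathscr{M}(\mho_{\sigma^j}))$; (2) there exists $(m_i)\in\prod_{i\in\mathbb{N}}M[i]$ with $m_0=m$ and $(m_i,m_{i-1})\in\widetilde{\mu}_i$ for all $i>0$, but $m\notin\bigcup_{i\in\mathbb{N}}\widetilde{\mu}_{\leq i}0$.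
   Context: The quiver $\mathcal{B}$: its vertices are the finite sequences of $0$'s and $1$'s (including the empty sequence $\emptyset$, the root); for each vertex $\sigma$ there are arrows $\Omega_\sigma\colon\sigma\to\sigma1$ and $\mho_\sigma\colon\sigma0\to\sigma$, where $\sigma1,\sigma0$ denote $\sigma$ extended on the right by $1$, resp. $0$. A $\mathcal{B}$-diagram $\mathscr{M}$ in $R$-modules assigns an $R$-module to each vertex and an $R$-linear map to each arrow. A ray is a sequence $(\sigma^0,\sigma^1,\dots)$ of vertices with $\sigma^0=\emptyset$ and $\sigma^{i}$ equal to $\sigma^{i-1}$ extended by one symbol; write $\sigma_i=+$ if that symbol is $1$ and $\sigma_i=-$ if it is $0$. Given a ray, put $M[i]=\mathscr{M}(\sigma^i)$ and, for $i\geq1$, let $\mu_i$ be the image under $\mathscr{M}$ of the arrow between $\sigma^{i-1}$ and $\sigma^i$: so $\mu_i=\mathscr{M}(\mho_{\sigma^{i-1}})\colon M[i]\to M[i-1]$ if $\sigma_i=-$, and $\mu_i=\mathscr{M}(\Omega_{\sigma^{i-1}})\colon M[i-1]\to M[i]$ if $\sigma_i=+$. Define the relation $\widetilde{\mu}_i\subseteq M[i]\oplus M[i-1]$ by $\widetilde{\mu}_i=\{(x,\mu_i(x)):x\in M[i]\}$ if $\sigma_i=-$ and $\widetilde{\mu}_i=\{(\mu_i(y),y):y\in M[i-1]\}$ if $\sigma_i=+$. For $S\subseteq M[n]$, $\widetilde{\mu}_{\leq 0}S=S$ (for $n=0$) and, for $n>0$, $\widetilde{\mu}_{\leq n}S$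 is the set of $m_0\in M[0]$ for which there are $m_i\in M[i]$ ($1\le i\le n$) with $m_n\in S$ and $(m_i,m_{i-1})\in\widetilde{\mu}_i$ for $1\leq i\leq n$. Here $\widetilde{\mu}_{\leq i}0$ means $\widetilde{\mu}_{\leq i}\{0\}$. *)

From HB Require Import structures.
From mathcomp Require Import all_boot all_order all_algebra.
Set Implicit Arguments. Unset Strict Implicit. Unset Printing Implicit Defensive.
Import GRing.Theory.
Local Open Scope ring_scope.

Section Ring.
Variable R : comNzRingType.

Definition is_ideal (I : R -> Prop) : Prop :=
  I 0 /\ (forall x y, I x -> I y -> I (x + y)) /\ (forall a x, I x -> I (a * x)).

Definition is_maximal_ideal (I : R -> Prop) : Prop :=
  is_ideal I /\ ~ I 1 /\
  forall K, is_ideal K -> (forall x, I x -> K x) -> (forall x, K x -> I x) \/ K 1.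

Definition noetherian_ring : Prop :=
  forall I, is_ideal I ->
    exists (k : nat) (g : 'I_k -> R),
      forall x, I x <-> exists c : 'I_k -> R, x = \sum_(i < k) c i * g i.

Definition semilocal_ring : Prop :=
  exists (n : nat) (f : 'I_n -> R -> Prop),
    forall I, is_maximal_ideal I -> exists i, forall x, I x <-> f i x.

Definition jacobson_radical (x : R) : Prop :=
  forall I, is_maximal_ideal I -> I x.

Definition ideal_mul (I K : R -> Prop) (x : R) : Prop :=
  exists (k : nat) (a b : 'I_k -> R),
    (forall i, I (a i)) /\ (forall i, K (b i)) /\ x = \sum_(i < k) a i * b i.

Fixpoint ideal_pow (I : R -> Prop) (n : nat) : R -> Prop :=
  match n with
  | 0 => fun _ => True
  | n.+1 => ideal_mul I (ideal_pow I n)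
  end.

Definition adically_complete (I : R -> Prop) : Prop :=
  (forall x, (forall n, ideal_pow I n x) -> x = 0) /\
  (forall u : nat -> R, (forall n, ideal_pow I n (u n.+1 - u n)) ->
     exists x, forall n, ideal_pow I n (x - u n)).

Definition fin_gen_module (M : lmodType R) : Prop :=
  exists (k : nat) (g : 'I_k -> M),
    forall x, exists c : 'I_k -> R, x = \sum_(i < k) c i *: g i.

End Ring.

(** B-diagrams in R-modules: vertices are finite 0/1 sequences (seq bool,
    true = 1, false = 0); Omega s : M s -> M (s1), Mho s : M (s0) -> M s. *)
Record Bdiagram (R : comNzRingType) := {
  Bmod : seq bool -> lmodType R;
  BOmega : forall s, {linear Bmod s -> Bmod (rcons s true)};
  BMho : forall s, {linear Bmod (rcons s false) -> Bmod s}
}.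

Section Rays.
Variable R : comNzRingType.
Variable D : Bdiagram R.

(** A ray is determined by its infinite bit sequence b; its i-th vertex. *)
Fixpoint ray_vertex (b : nat -> bool) (n : nat) : seq bool :=
  match n with
  | 0 => [::]
  | n.+1 => rcons (ray_vertex b n) (b n)
  end.

(** The relation ~mu for the arrow between s and (rcons s c):
    (x, y) in ~mu  with x in M(rcons s c), y in M(s). *)
Definition mu_rel (s : seq bool) (c : bool) :
    Bmod D (rcons s c) -> Bmod D s -> Prop :=
  if c as c0 return Bmod D (rcons s c0) -> Bmod D s -> Prop then
    fun x y => x = BOmega D s y
  else
    fun x y => y = BMho D s x.

Definition mu_le (b : nat -> bool) (n : nat)
    (S : Bmod D (ray_vertex b n) -> Prop) (m0 : Bmod D [::]) : Prop :=
  exists m : forall i, Bmod D (ray_vertex b i),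
    m 0%N = m0 /\ S (m n) /\
    forall i, (i < n)%N -> @mu_rel (ray_vertex b i) (b i) (m i.+1) (m i).

Definition ker_Omega (s : seq bool) (x : Bmod D s) : Prop := BOmega D s x = 0.
Definition im_Mho (s : seq bool) (x : Bmod D s) : Prop :=
  exists y, BMho D s y = x.
Definition zero_set (s : seq bool) (x : Bmod D s) : Prop := x = 0.

End Rays.

Arguments mu_rel {R} D s c x y.
Arguments mu_le {R} D b n S m0.
Arguments ker_Omega {R} D s x.
Arguments im_Mho {R} D s x.
Arguments zero_set {R} D s x.

From HB Require Import structures.
From mathcomp Require Import all_boot all_order all_algebra zify ring.
From Stdlib Require Import Classical ClassicalEpsilon FunctionalExtensionality PropExtensionality.
Set Implicit Arguments. Unset Strict Implicit. Unset Printing Implicit Defensive.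
Import GRing.Theory.
Local Open Scope ring_scope.

(* The ray is chosen greedily: at each vertex it goes down along Mho when the
   set of elements reached from [m] meets the image of Mho, and up along Omega
   otherwise.  If some reached set meets the kernel of Omega but not the image
   of Mho, the ray goes up there and reaches 0, so (1) holds and (2) fails.
   Otherwise every reached set is nonempty and avoids 0, so (1) fails and [m]
   starts chains of every finite length along the ray.  An infinite chain then
   exists because a finitely generated module over a complete semilocal
   noetherian ring is linearly compact: nonempty nested cosets of submodules
   [N k] have a common point.  Descending chains between [N] and [J^t N]
   stabilise, as [N / J N] has finite length; this yields points [y t] with
   [y (t+1) - y t] in [J^t N (p t)], and the J-adic completeness of [R] lets
   their coefficients be summed. *)

Lemma dependent_choice (A : nat -> Type) (P : forall t, A t -> Prop)
    (Rel : forall t, A t -> A t.+1 -> Prop) (x0 : A 0) :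
  P 0 x0 -> (forall t x, P t x -> exists y, P t.+1 y /\ Rel t x y) ->
  exists f : forall t, A t, f 0%N = x0 /\ forall t, P t (f t) /\ Rel t (f t) (f t.+1).
Proof.
move=> P0 step.
have next t (x : {x | P t x}) : {y | P t.+1 y /\ Rel t (sval x) y}.
  exact: constructive_indefinite_description (step t _ (svalP x)).
pose fix f t : {x | P t x} :=
  if t is t'.+1 then exist _ (sval (next t' (f t'))) (proj1 (svalP (next t' (f t'))))
  else exist _ x0 P0.
exists (fun t => sval (f t)); split=> // t; split; first exact: svalP.
exact: proj2 (svalP (next t (f t))).
Qed.

Inductive finsum (V : zmodType) (P : V -> Prop) : V -> Prop :=
| finsum0 : finsum P 0
| finsumS x y : P x -> finsum P y -> finsum P (x + y).

Section FinSum.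
Variable V : zmodType.
Implicit Types P Q : V -> Prop.

Lemma finsum1 P x : P x -> finsum P x.
Proof. by move=> Px; rewrite -[x]addr0; apply: finsumS => //; apply: finsum0. Qed.

Lemma finsumD P x y : finsum P x -> finsum P y -> finsum P (x + y).
Proof.
elim=> [|a b Pa _ IH] Hy; first by rewrite add0r.
by rewrite -addrA; apply: finsumS => //; apply: IH.
Qed.

Lemma finsum_closed P Q x : Q 0 -> (forall a b, Q a -> Q b -> Q (a + b)) ->
  (forall y, P y -> Q y) -> finsum P x -> Q x.
Proof. by move=> Q0 QD PQ; elim=> // a b Pa _; apply: QD; apply: PQ. Qed.

Lemma finsum_sub P Q x : (forall y, P y -> Q y) -> finsum P x -> finsum Q x.
Proof.
by move=> PQ; apply: finsum_closed => [|a b|y /PQ/finsum1]; [apply: finsum0|apply: finsumD|].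
Qed.

Lemma finsum_morph (W : zmodType) (f : {additive V -> W}) P (Q : W -> Prop) x :
  (forall y, P y -> Q (f y)) -> finsum P x -> finsum Q (f x).
Proof.
move=> PQ; elim=> [|a b Pa _ IH]; first by rewrite raddf0; apply: finsum0.
by rewrite raddfD; apply: finsumS => //; apply: PQ.
Qed.

Lemma finsum_bigP P x :
  finsum P x <-> exists k (F : 'I_k -> V), (forall i, P (F i)) /\ x = \sum_(i < k) F i.
Proof.
split=> [|[k [F [PF ->]]]]; last first.
  elim: k F PF => [|k IH] F PF; first by rewrite big_ord0; apply: finsum0.
  by rewrite big_ord_recl; apply: finsumS => //; apply: IH.
elim=> [|a b Pa _ [k [F [PF ->]]]].
  by exists 0%N, (fun _ => 0); rewrite big_ord0; split=> // -[].
exists k.+1, (fun i => if unlift ord0 i is Some j then F j else a); split.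
  by move=> i; case: (unlift ord0 i).
by rewrite big_ord_recl unlift_none; congr (_ + _); apply: eq_bigr => i _; rewrite liftK.
Qed.

End FinSum.

Section Ideals.
Variable R : comNzRingType.
Implicit Types I K : R -> Prop.

Lemma idealB I x y : is_ideal I -> I x -> I y -> I (x - y).
Proof. by move=> [_ [ID IM]] Ix Iy; apply: ID => //; rewrite -mulN1r; apply: IM. Qed.

Lemma ideal_sum I n (G : nat -> R) :
  is_ideal I -> (forall j, (j < n)%N -> I (G j)) -> I (\sum_(j < n) G j).
Proof.
move=> [I0 [ID _]]; elim: n => [|n IH] IG; first by rewrite big_ord0.
by rewrite big_ord_recr; apply: ID; [apply: IH => j /ltnW; apply: IG|apply: IG].
Qed.

Lemma ideal_mulE I K x :
  ideal_mul I K x <-> finsum (fun y => exists a b, I a /\ K b /\ y = a * b) x.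
Proof.
split=> [[k [a [b [Ia [Kb ->]]]]]|/finsum_bigP [k [F [PF ->]]]].
  by apply/finsum_bigP; exists k, (fun i => a i * b i); split=> // i; exists (a i), (b i).
have /choice [ab abP] : forall i, exists p : R * R, [/\ I p.1, K p.2 & F i = p.1 * p.2].
  by move=> i; have [a [b [Ia [Kb ->]]]] := PF i; exists (a, b).
exists k, (fun i => (ab i).1), (fun i => (ab i).2).
split; first by move=> i; case: (abP i).
split; first by move=> i; case: (abP i).
by apply: eq_bigr => i _; case: (abP i).
Qed.

Lemma ideal_mul_ideal I K : is_ideal K -> is_ideal (ideal_mul I K).
Proof.
move=> [K0 [KD KM]]; split; first by apply/ideal_mulE; apply: finsum0.
split=> [x y /ideal_mulE Hx /ideal_mulE Hy|r x /ideal_mulE Hx]; apply/ideal_mulE.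
  exact: finsumD.
apply: (finsum_morph (f := *:%R r : {additive R^o -> R^o}) _ Hx) => _ [a [b [Ia [Kb ->]]]].
by exists a, (r * b); rewrite /= mulrCA; split=> //; split=> //; apply: KM.
Qed.

Lemma ideal_mul_le I K x : is_ideal K -> ideal_mul I K x -> K x.
Proof.
by move=> [K0 [KD KM]] /ideal_mulE; apply: finsum_closed => // _ [a [b [_ [Kb ->]]]]; apply: KM.
Qed.

Lemma ideal_pow_ideal I t : is_ideal (ideal_pow I t).
Proof. by elim: t => [|t IH] /=; [split|apply: ideal_mul_ideal]. Qed.

Lemma ideal_powS I t a c : I a -> ideal_pow I t c -> ideal_pow I t.+1 (a * c).
Proof. by move=> Ia Hc; apply/ideal_mulE; apply: finsum1; exists a, c. Qed.

Lemma ideal_pow_le I t u x : (t <= u)%N -> ideal_pow I u x -> ideal_pow I t x.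
Proof.
move=> /subnKC <-; elim: (u - t)%N x => [|d IH] x; first by rewrite addn0.
by rewrite addnS => H; apply: IH; apply: ideal_mul_le H; apply: ideal_pow_ideal.
Qed.

Lemma jacobson_radical_ideal : is_ideal (@jacobson_radical R).
Proof.
split; first by move=> I [[]].
split=> [x y Jx Jy I HI|a x Jx I HI]; case: HI (HI) => [[_ [ID IM]] _] HI.
  by apply: ID; [apply: Jx|apply: Jy].
by apply: IM; apply: Jx.
Qed.

Lemma maximal_ideal_comaximal (m : R -> Prop) r :
  is_maximal_ideal m -> ~ m r -> exists a s, m a /\ 1 = a + s * r.
Proof.
move=> [[m0 [mD mM]] [_ mmax]] mr.
pose K z := exists a s, m a /\ z = a + s * r.
have idK : is_ideal K.
  split; first by exists 0, 0; rewrite mul0r addr0.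
  split=> [_ _ [a [s [ma ->]]] [a' [s' [ma' ->]]]|c _ [a [s [ma ->]]]].
    by exists (a + a'), (s + s'); rewrite mulrDl addrACA; split=> //; apply: mD.
  by exists (c * a), (c * s); rewrite mulrDr mulrA; split=> //; apply: mM.
case: (mmax K idK) => [z mz|Km|//].
  by exists z, 0; rewrite mul0r addr0.
by case: mr; apply: Km; exists 0, 1; rewrite mul1r add0r.
Qed.

End Ideals.

Section Submodules.
Variables (R : comNzRingType) (M : lmodType R).
Implicit Types (I : R -> Prop) (A B N X : M -> Prop).

Definition is_submodule N :=
  N 0 /\ (forall x y, N x -> N y -> N (x + y)) /\ (forall (a : R) x, N x -> N (a *: x)).

Lemma submodN N x : is_submodule N -> N x -> N (- x).
Proof. by move=> [_ [_ NZ]] Nx; rewrite -scaleN1r; apply: NZ. Qed.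

Lemma submodB N x y : is_submodule N -> N x -> N y -> N (x - y).
Proof. by move=> HN Nx Ny; case: (HN) => _ [ND _]; apply: ND => //; apply: submodN. Qed.

Lemma submod_finsum N P x : is_submodule N -> (forall y, P y -> N y) -> finsum P x -> N x.
Proof. by move=> [N0 [ND _]]; apply: finsum_closed. Qed.

Lemma submodI N N' : is_submodule N -> is_submodule N' -> is_submodule (fun x => N x /\ N' x).
Proof.
move=> [N0 [ND NZ]] [N'0 [N'D N'Z]]; split=> //; split=> [x y [] ? ? [] ? ?|a x [] ? ?].
  by split; [apply: ND|apply: N'D].
by split; [apply: NZ|apply: N'Z].
Qed.

Definition addsm A B x := exists y z, A y /\ B z /\ x = y + z.

Lemma addsm_submod A B : is_submodule A -> is_submodule B -> is_submodule (addsm A B).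
Proof.
move=> [A0 [AD AZ]] [B0 [BD BZ]]; split; first by exists 0, 0; rewrite addr0.
split=> [_ _ [y [z [Ay [Bz ->]]]] [y' [z' [Ay' [Bz' ->]]]]|a _ [y [z [Ay [Bz ->]]]]].
  by exists (y + y'), (z + z'); rewrite addrACA; split; [apply: AD|split=> //; apply: BD].
by exists (a *: y), (a *: z); rewrite scalerDr; split; [apply: AZ|split=> //; apply: BZ].
Qed.

Lemma submod_lin N :
  N 0 -> (forall a x y, N x -> N y -> N (a *: x + y)) -> is_submodule N.
Proof.
move=> N0 NP; split=> //; split=> [x y Nx Ny|a x Nx]; first by rewrite -[x]scale1r; apply: NP.
by rewrite -[_ *: _]addr0; apply: NP.
Qed.

Definition ideal_smul I X : M -> Prop :=
  finsum (fun y => exists a x, I a /\ X x /\ y = a *: x).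

Lemma ideal_smul_submod I X : is_ideal I -> is_submodule (ideal_smul I X).
Proof.
move=> [_ [_ IM]]; split; first exact: finsum0.
split=> [x y|r x Hx]; first exact: finsumD.
apply: (finsum_morph (f := *:%R r) _ Hx) => _ [a [z [Ia [Xz ->]]]].
by exists (r * a), z; rewrite /= scalerA; split=> //; apply: IM.
Qed.

Lemma ideal_smul_le I X x : is_submodule X -> ideal_smul I X x -> X x.
Proof.
move=> HX; apply: submod_finsum => // _ [a [z [_ [Xz ->]]]].
by case: HX => _ [_]; apply.
Qed.

Lemma ideal_smul_sub I K X Y x : (forall a, I a -> K a) -> (forall y, X y -> Y y) ->
  ideal_smul I X x -> ideal_smul K Y x.
Proof.
move=> IK XY; apply: finsum_sub => _ [a [y [Ia [Xy ->]]]].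
by exists a, y; split; [apply: IK|split; [apply: XY|]].
Qed.

Lemma ideal_smulA I K L X x : (forall a c, I a -> K c -> L (a * c)) ->
  ideal_smul I (ideal_smul K X) x -> ideal_smul L X x.
Proof.
move=> IKL; apply: finsum_closed => [|y z|_ [a [y [Ia [Ky ->]]]]].
- exact: finsum0.
- exact: finsumD.
apply: (finsum_morph (f := *:%R a) _ Ky) => _ [c [z [Kc [Xz ->]]]].
by exists (a * c), z; rewrite /= scalerA; split=> //; apply: IKL.
Qed.

End Submodules.

Section LinearCombinations.
Variables (R : comNzRingType) (M : lmodType R).
Implicit Types (I : R -> Prop) (N : M -> Prop) (c d : nat -> R) (h : nat -> M).

Definition lincomb n c h : M := \sum_(i < n) c i *: h i.

Definition lspan_in I n h x := exists c, (forall i, I (c i)) /\ x = lincomb n c h.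

Definition lspan n h x := exists c, x = lincomb n c h.

Definition fin_gen N := exists n h, forall x, N x <-> lspan n h x.

Lemma lincomb0 c h : lincomb 0 c h = 0.
Proof. by rewrite /lincomb big_ord0. Qed.

Lemma lincombS n c h : lincomb n.+1 c h = lincomb n c h + c n *: h n.
Proof. by rewrite /lincomb big_ord_recr. Qed.

Lemma eq_lincomb n c d h : (forall i, (i < n)%N -> c i = d i) -> lincomb n c h = lincomb n d h.
Proof. by move=> cd; apply: eq_bigr => i _; rewrite cd. Qed.

Lemma lincomb_zero n h : lincomb n (fun _ => 0) h = 0.
Proof. by rewrite /lincomb big1 // => i _; rewrite scale0r. Qed.

Lemma lincombD n c d h : lincomb n (fun i => c i + d i) h = lincomb n c h + lincomb n d h.
Proof. by rewrite /lincomb -big_split; apply: eq_bigr => i _; rewrite scalerDl. Qed.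

Lemma lincombZ n a c h : a *: lincomb n c h = lincomb n (fun i => a * c i) h.
Proof. by rewrite /lincomb scaler_sumr; apply: eq_bigr => i _; rewrite scalerA. Qed.

Lemma lincomb_delta n i h : (i < n)%N -> lincomb n (fun j => (j == i)%:R) h = h i.
Proof.
move=> lt_in; rewrite /lincomb (bigD1 (Ordinal lt_in)) //= eqxx scale1r big1 ?addr0 //.
by move=> j; rewrite -val_eqE /= => /negbTE ->; rewrite scale0r.
Qed.

Lemma lincomb_cat n1 n2 c1 c2 h1 h2 :
  lincomb n1 c1 h1 + lincomb n2 c2 h2 =
  lincomb (n1 + n2) (fun i => if (i < n1)%N then c1 i else c2 (i - n1)%N)
    (fun i => if (i < n1)%N then h1 i else h2 (i - n1)%N).
Proof.
rewrite /lincomb big_split_ord /=; congr (_ + _); apply: eq_bigr => i _ /=.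
  by rewrite ltn_ord.
by rewrite ltnNge leq_addr /= addKn.
Qed.

Lemma lincomb_comp n k (h h' : nat -> M) (B : nat -> nat -> R) (a : nat -> R) :
  (forall j, (j < k)%N -> h' j = lincomb n (B j) h) ->
  lincomb n (fun i => \sum_(j < k) a j * B j i) h = lincomb k a h'.
Proof.
move=> Eh'; rewrite /lincomb; under eq_bigr do rewrite scaler_suml.
rewrite exchange_big /=; apply: eq_bigr => j _.
by rewrite Eh' // /lincomb scaler_sumr; apply: eq_bigr => i _; rewrite scalerA.
Qed.

Lemma lincomb_submod N n c h :
  is_submodule N -> (forall i, (i < n)%N -> N (h i)) -> N (lincomb n c h).
Proof.
move=> [N0 [ND NZ]]; elim: n => [|n IH] Nh; first by rewrite lincomb0.
by rewrite lincombS; apply: ND; [apply: IH => i /ltnW; apply: Nh|apply: NZ; apply: Nh].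
Qed.

Lemma lspan_in_submod I n h : is_ideal I -> is_submodule (lspan_in I n h).
Proof.
move=> [I0 [ID IM]]; split; first by exists (fun _ => 0); rewrite lincomb_zero.
split=> [_ _ [c [Ic ->]] [d [Id ->]]|a _ [c [Ic ->]]].
  by exists (fun i => c i + d i); rewrite lincombD; split=> // i; apply: ID.
by exists (fun i => a * c i); rewrite lincombZ; split=> // i; apply: IM.
Qed.

Lemma lspan_submod n h : is_submodule (lspan n h).
Proof.
split; first by exists (fun _ => 0); rewrite lincomb_zero.
split=> [x y [c ->] [d ->]|a x [c ->]]; first by exists (fun i => c i + d i); rewrite lincombD.
by exists (fun i => a * c i); rewrite lincombZ.
Qed.

Lemma lspan_gen n h i : (i < n)%N -> lspan n h (h i).
Proof. by move=> lt_in; exists (fun j => (j == i)%:R); rewrite lincomb_delta. Qed.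

Lemma lspanS n h x : lspan n h x -> lspan n.+1 h x.
Proof.
move=> [c ->]; exists (fun i => if i == n then 0 else c i).
rewrite lincombS eqxx scale0r addr0; apply: eq_lincomb => i lt_in.
by rewrite ifN // neq_ltn lt_in.
Qed.

Lemma fin_gen_sub N n h : (forall x, N x <-> lspan n h x) -> forall i, (i < n)%N -> N (h i).
Proof. by move=> Nh i /lspan_gen /Nh. Qed.

End LinearCombinations.

Definition nat_fam (V : zmodType) k (F : 'I_k -> V) (j : nat) : V := oapp F 0 (insub j).

Lemma nat_famE (V : zmodType) k (F : 'I_k -> V) (i : 'I_k) : nat_fam F i = F i.
Proof. by rewrite /nat_fam valK. Qed.

Section Noetherian.
Variables (R : comNzRingType) (M : lmodType R).
Hypothesis noethR : noetherian_ring R.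

Lemma noetherian_ideal_fin_gen I : is_ideal I -> fin_gen (M := R^o) I.
Proof.
move=> idI; have [k [g Ig]] := noethR idI; exists k, (nat_fam g) => r.
split=> [/Ig [c ->]|[c ->]]; first by exists (nat_fam c); apply: eq_bigr => i _; rewrite !nat_famE.
by apply/Ig; exists (fun i => c i); apply: eq_bigr => i _; rewrite nat_famE.
Qed.

Lemma last_coef_ideal (N : M -> Prop) n (g : nat -> M) : is_submodule N ->
  is_ideal (fun r => exists c, N (lincomb n c g + r *: g n)).
Proof.
move=> [N0 [ND NZ]]; split; first by exists (fun _ => 0); rewrite lincomb_zero scale0r addr0.
split=> [x y [c Nx] [d Ny]|a x [c Nx]].
  by exists (fun i => c i + d i); rewrite lincombD scalerDl addrACA; apply: ND.
by exists (fun i => a * c i); rewrite -lincombZ -scalerA -scalerDr; apply: NZ.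
Qed.

Lemma noetherian_fin_gen n (g : nat -> M) (N : M -> Prop) :
  is_submodule N -> (forall x, N x -> lspan n g x) -> fin_gen N.
Proof.
(* Induction on [n], through the ideal of last coefficients. *)
elim: n N => [|n IH] N subN Ng.
  exists 0%N, (fun _ => 0) => x; split=> [/Ng [c ->]|[c ->]]; first by exists c; rewrite !lincomb0.
  by rewrite lincomb0; case: subN.
have [k [gI Igen]] := noetherian_ideal_fin_gen (last_coef_ideal n g subN).
have /choice [d Nd] :
    forall j, exists dj, (j < k)%N -> N (lincomb n dj g + gI j *: g n).
  move=> j; case: (ltnP j k) => [/(fin_gen_sub Igen) [c Nc]|]; first by exists c.
  by exists (fun _ => 0).
pose xs j := lincomb n (d j) g + gI j *: g n.
pose N' x := N x /\ lspan n g x.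
have [n' [h' Nh']] := IH N' (submodI subN (lspan_submod n g)) (fun x => @proj2 _ _).
exists (n' + k)%N, (fun i => if (i < n')%N then h' i else xs (i - n')%N) => x; split.
  move=> Nx; have [c xE] := Ng x Nx.
  have /Igen [e cnE] : exists c', N (lincomb n c' g + c n *: g n).
    by exists c; rewrite -lincombS -xE.
  have N'z : N' (x - lincomb k e xs).
    split; first by apply: submodB => //; apply: lincomb_submod.
    have -> : lincomb k e xs =
        lincomb k e (fun j => lincomb n (d j) g) + lincomb k e gI *: g n.
      by rewrite /lincomb scaler_suml -big_split; apply: eq_bigr => j _; rewrite scalerDr scalerA.
    rewrite xE lincombS cnE opprD addrACA subrr addr0.
    apply: submodB; first exact: lspan_submod.
      by exists c.
    by apply: lincomb_submod => [|j _]; [exact: lspan_submod|exists (d j)].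
  have [c' zE] := (Nh' _).1 N'z.
  exists (fun i => if (i < n')%N then c' i else e (i - n')%N).
  by rewrite -lincomb_cat -zE subrK.
move=> [c ->]; apply: lincomb_submod => // i lt_i; case: ifP => lt_in'.
  by have [] := fin_gen_sub Nh' lt_in'.
by apply: Nd; rewrite ltn_subLR // leqNgt lt_in'.
Qed.

Lemma fin_gen_module_span : fin_gen_module M -> exists n (g : nat -> M), forall x, lspan n g x.
Proof.
move=> [k [g gen]]; exists k, (nat_fam g) => x; have [c ->] := gen x.
by exists (nat_fam c); apply: eq_bigr => i _; rewrite !nat_famE.
Qed.

Lemma noetherian_submod_fin_gen (N : M -> Prop) :
  fin_gen_module M -> is_submodule N -> fin_gen N.
Proof.
move=> /fin_gen_module_span [n [g gen]] subN.
exact: noetherian_fin_gen subN (fun x _ => gen x).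
Qed.

End Noetherian.

Definition descending (T : Type) (Q : nat -> T -> Prop) := forall k x, Q k.+1 x -> Q k x.

Lemma descending_le (T : Type) (Q : nat -> T -> Prop) k l x :
  descending Q -> (k <= l)%N -> Q l x -> Q k x.
Proof.
move=> decQ /subnKC <-; elim: (l - k)%N => [|d IH]; first by rewrite addn0.
by rewrite addnS => /decQ.
Qed.

Section Artinian.
Variables (R : comNzRingType) (M : lmodType R).
Implicit Types (A B C : M -> Prop) (Q : nat -> M -> Prop).

(* The submodules between [B] and [A] satisfy the descending chain condition,
   i.e. [A / B] is artinian. *)
Definition dcc_between A B := forall Q, (forall k, is_submodule (Q k)) -> descending Q ->
  (forall k x, B x -> Q k x) -> (forall k x, Q k x -> A x) ->
  exists K, forall k, (K <= k)%N -> forall x, Q K x -> Q k x.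

Lemma dcc_between_sub A B A' B' :
  dcc_between A B -> (forall x, A' x -> A x) -> (forall x, B x -> B' x) -> dcc_between A' B'.
Proof.
move=> dccAB A'A BB' Q subQ decQ B'Q QA'; apply: dccAB => // k x.
  by move=> /BB'; apply: B'Q.
by move=> /QA'/A'A.
Qed.

Lemma dcc_between_refl B : dcc_between B B.
Proof. by move=> Q _ _ BQ QB; exists 0%N => k _ x /QB /(BQ k). Qed.

Lemma dcc_between_trans A B C : is_submodule A -> is_submodule B ->
  (forall x, C x -> B x) -> (forall x, B x -> A x) ->
  dcc_between A B -> dcc_between B C -> dcc_between A C.
Proof.
move=> subA subB CB BA dccAB dccBC Q subQ decQ CQ QA.
have [K1 stab1] : exists K, forall k, (K <= k)%N ->
    forall x, addsm (Q K) B x -> addsm (Q k) B x.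
  apply: dccAB => [k|k x|k x Bx|k _ [y [z [Qy [Bz ->]]]]].
  - exact: addsm_submod.
  - by move=> [y [z [/decQ Qy [Bz ->]]]]; exists y, z.
  - by exists 0, x; rewrite add0r; split=> //; case: (subQ k).
  - by case: subA => _ [AD _]; apply: AD; [apply: QA Qy|apply: BA].
have [K2 stab2] : exists K, forall k, (K <= k)%N ->
    forall x, Q K x /\ B x -> Q k x /\ B x.
  apply: dccBC => [k|k x []|k x Cx|k x []//].
  - exact: submodI.
  - by move=> /decQ.
  - by split; [apply: CQ|apply: CB].
exists (maxn K1 K2) => k le_Kk x Qx.
have [y [z [Qy [Bz xE]]]] : addsm (Q k) B x.
  apply: stab1; first exact: leq_trans (leq_maxl _ _) le_Kk.
  exists x, 0; rewrite addr0; split; last by case: subB.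
  exact: descending_le decQ (leq_maxl _ _) Qx.
have Qz : Q k z.
  have zE : z = x - y by rewrite xE addrC addKr.
  have /(stab2 k (leq_trans (leq_maxr _ _) le_Kk)) [] // : Q K2 z /\ B z.
  split=> //; rewrite zE.
  apply: submodB => //; first exact: descending_le decQ (leq_maxr _ _) Qx.
  exact: descending_le decQ (leq_trans (leq_maxr _ _) le_Kk) Qy.
by rewrite xE; case: (subQ k) => _ [QD _]; apply: QD.
Qed.

Lemma dcc_between_simple (m : R -> Prop) B h : is_maximal_ideal m -> is_submodule B ->
  (forall a, m a -> B (a *: h)) -> dcc_between (addsm B (fun x => exists r, x = r *: h)) B.
Proof.
move=> maxm subB mhB Q subQ decQ BQ QA.
have QD k x y : Q k x -> Q k y -> Q k (x + y) by case: (subQ k) => _ [+ _]; apply.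
have QZ k a x : Q k x -> Q k (a *: x) by case: (subQ k) => _ [_]; apply.
case: (classic (forall k, Q k h)) => [Qh|/not_all_ex_not [K nQh]].
  exists 0%N => k _ x /QA [y [z [By [[r ->] ->]]]].
  by apply: QD; [apply: BQ|apply: QZ].
exists K => k _ x QKx; apply: (BQ k).
have [y [_ [By [[r ->] xE]]]] := QA _ _ QKx.
case: (classic (m r)) => [mr|nmr].
  by rewrite xE; case: subB => _ [BD _]; apply: BD => //; apply: mhB.
case: nQh; have [a [s [ma E1]]] := maximal_ideal_comaximal maxm nmr.
have -> : h = a *: h + s *: (r *: h) by rewrite scalerA -scalerDl -E1 scale1r.
apply: QD; first by apply: BQ; apply: mhB.
have -> : r *: h = x - y by rewrite xE addrAC subrr add0r.
by apply: QZ; apply: submodB => //; apply: BQ.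
Qed.

Lemma dcc_between_smul_maximal (m : R -> Prop) B : is_maximal_ideal m -> is_submodule B ->
  fin_gen B -> dcc_between B (ideal_smul m B).
Proof.
move=> maxm subB [n [g Bg]].
have idm : is_ideal m by case: maxm.
pose Y j := addsm (ideal_smul m B) (lspan j g).
have subY j : is_submodule (Y j).
  by apply: addsm_submod; [apply: ideal_smul_submod|apply: lspan_submod].
have YS j x : Y j x -> Y j.+1 x.
  by move=> [y [z [my [/lspanS gz ->]]]]; exists y, z.
have Y0 j x : Y 0%N x -> Y j x by elim: j => // j IH /IH /YS.
have dccY j : (j <= n)%N -> dcc_between (Y j) (Y 0%N).
  elim: j => [_|j IH lt_jn]; first exact: dcc_between_refl.
  apply: (dcc_between_trans (subY _) (subY _) (Y0 j) (YS j) _ (IH (ltnW lt_jn))).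
  apply: dcc_between_sub (dcc_between_simple (h := g j) maxm (subY j) _) _ _ => [a ma|x|//].
  - exists (a *: g j), 0; rewrite addr0; split; last by split=> //; case: (lspan_submod j g).
    by apply: finsum1; exists a, (g j); split=> //; split=> //; apply: fin_gen_sub Bg _ lt_jn.
  - move=> [y [_ [my [[c ->] ->]]]]; exists (y + lincomb j c g), (c j *: g j).
    rewrite lincombS addrA; split; last by split=> //; exists (c j).
    by exists y, (lincomb j c g); split=> //; split=> //; exists c.
apply: dcc_between_sub (dccY n (leqnn n)) _ _ => x.
  by move=> /Bg gx; exists 0, x; rewrite add0r; split=> //; apply: finsum0.
by move=> [y [_ [my [[c ->] ->]]]]; rewrite lincomb0 addr0.
Qed.

End Artinian.

Section JacobsonArtinian.
Variables (R : comNzRingType) (M : lmodType R).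
Hypotheses (noethR : noetherian_ring R) (semilocR : semilocal_ring R).
Hypothesis fgM : fin_gen_module M.
Implicit Types B : M -> Prop.

Local Notation J := (@jacobson_radical R).

Lemma ideal_smul1 (I : R -> Prop) B x : I 1 -> B x -> ideal_smul I B x.
Proof. by move=> I1 Bx; apply: finsum1; exists 1, x; rewrite scale1r. Qed.

Lemma dcc_between_smul_maximal_meet k (f : 'I_k -> R -> Prop) B : is_submodule B ->
  dcc_between B (ideal_smul (fun c => forall i, is_maximal_ideal (f i) -> f i c) B).
Proof.
move=> subB; elim: k f => [|k IH] f.
  apply: dcc_between_sub (dcc_between_refl (B := B)) _ _ => // x.
  by apply: ideal_smul1 => -[].
set P' := (fun c => forall i, is_maximal_ideal (f (lift ord0 i)) -> f (lift ord0 i) c).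
have subX' : is_submodule (ideal_smul P' B).
  apply: ideal_smul_submod; split; first by move=> i [[]].
  split=> [x y Px Py i maxi|a x Px i maxi]; case: (maxi) => [[_ [ID IM]] _].
    by apply: ID; [apply: Px|apply: Py].
  by apply: IM; apply: Px.
case: (classic (is_maximal_ideal (f ord0))) => [max0|nmax0]; last first.
  apply: dcc_between_sub (IH (fun i => f (lift ord0 i))) _ _ => // x.
  apply: ideal_smul_sub => // c P'c i.
  by case: (unliftP ord0 i) => [j ->|-> //]; apply: P'c.
apply: dcc_between_sub (dcc_between_trans subB subX' _ _ (IH (fun i => f (lift ord0 i)))
  (dcc_between_smul_maximal max0 subX' (noetherian_submod_fin_gen noethR fgM subX'))) _ _ => //.
- by move=> x /(ideal_smul_le subX').
- by move=> x /(ideal_smul_le subB).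
move=> x; apply: ideal_smulA => a c f0a P'c i.
case: (unliftP ord0 i) => [j ->|->] maxi; case: (maxi) => [[_ [_ IM]] _].
  by apply: IM; apply: P'c.
by rewrite mulrC; apply: IM.
Qed.

Lemma dcc_between_smul_jacobson B : is_submodule B -> dcc_between B (ideal_smul J B).
Proof.
move=> subB; have [n [f fmax]] := semilocR.
apply: dcc_between_sub (dcc_between_smul_maximal_meet (f := f) subB) _ _ => // x.
apply: ideal_smul_sub => // c Pc I maxI; have [i Ii] := fmax I maxI.
have If : I = f i by apply: functional_extensionality => y; apply: propositional_extensionality.
by rewrite If; apply: Pc; rewrite -If.
Qed.

Lemma dcc_between_lspan_pow B n h t : is_submodule B -> (forall x, B x <-> lspan n h x) ->
  dcc_between B (lspan_in (ideal_pow J t) n h).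
Proof.
move=> subB Bh; pose X t := iter t (ideal_smul J) B.
have subX u : is_submodule (X u) /\ forall x, X u x -> B x.
  elim: u => [|u [subXu XuB]] //=; split.
    by apply: ideal_smul_submod; apply: jacobson_radical_ideal.
  by move=> x /(ideal_smul_le subXu) /XuB.
have dccX u : dcc_between B (X u).
  elim: u => [|u IH]; first exact: dcc_between_refl.
  have [subXu XuB] := subX u.
  apply: (dcc_between_trans subB subXu _ XuB IH (dcc_between_smul_jacobson subXu)).
  by move=> x /(ideal_smul_le subXu).
apply: dcc_between_sub (dccX t) _ _ => // x; elim: t x => [|t IH] x /=.
  by move=> /Bh [c ->]; exists c.
apply: submod_finsum => [|_ [a [y [Ja [/IH [c [Jc ->]] ->]]]]].
  exact: lspan_in_submod (ideal_pow_ideal _ t.+1).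
by exists (fun i => a * c i); rewrite lincombZ; split=> // i; apply: ideal_powS.
Qed.

End JacobsonArtinian.

Section CompleteSeries.
Variables (R : comNzRingType) (M : lmodType R).
Hypothesis complR : adically_complete (@jacobson_radical R).

Local Notation J := (@jacobson_radical R).

Lemma ideal_pow_sum_mul t n (a B : nat -> R) :
  (forall j, (j < n)%N -> ideal_pow J t (a j)) -> ideal_pow J t (\sum_(j < n) a j * B j).
Proof.
move=> Ja; have idJt := ideal_pow_ideal J t; case: (idJt) => _ [_ IM].
apply: (ideal_sum (G := fun j => a j * B j)) => // j /Ja.
by rewrite mulrC; apply: IM.
Qed.

Lemma coef_series (n : nat -> nat) (B : nat -> nat -> nat -> R) (e : nat -> nat -> R) :
  (forall t i, ideal_pow J t (e t i)) ->
  exists c : nat -> nat -> R,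
    forall t i, c t i = e t i + \sum_(j < n t.+1) c t.+1 j * B t j i.
Proof.
move=> Je; case: complR => sepR cauchyR.
(* [c t] is the J-adic sum over [u] of [F u t], the contribution of [e (t + u)]. *)
pose fix F u t i {struct u} :=
  if u is u'.+1 then \sum_(j < n t.+1) F u' t.+1 j * B t j i else e t i.
have JF u t i : ideal_pow J (t + u) (F u t i).
  elim: u t i => [|u IH] t i /=; first by rewrite addn0.
  apply: (ideal_pow_sum_mul (a := fun j => F u t.+1 j) (fun j => B t j i)) => j _.
  by rewrite addnS -addSn; apply: IH.
pose P U t i := \sum_(u < U) F u t i.
have PS U t i : P U.+1 t i = e t i + \sum_(j < n t.+1) P U t.+1 j * B t j i.
  rewrite /P big_ord_recl /=; congr (_ + _).
  by under [in RHS]eq_bigr do rewrite mulr_suml; rewrite exchange_big.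
have /choice [c0 c0P] : forall ti : nat * nat,
    exists c, forall U, ideal_pow J U (c - P U ti.1 ti.2).
  move=> [t i]; apply: cauchyR => U /=; rewrite /P big_ord_recr /= addrAC subrr add0r.
  exact: ideal_pow_le (leq_addl t U) (JF U t i).
pose c t i := c0 (t, i); exists c => t i; apply/eqP; rewrite -subr_eq0; apply/eqP.
apply: sepR => U.
have -> : c t i - (e t i + \sum_(j < n t.+1) c t.+1 j * B t j i) =
    (c t i - P U.+1 t i) - \sum_(j < n t.+1) (c t.+1 j - P U t.+1 j) * B t j i.
  rewrite PS; under [X in _ = _ - X]eq_bigr do rewrite mulrBl.
  by rewrite sumrB; ring.
apply: idealB; first exact: ideal_pow_ideal.
  exact: ideal_pow_le (leqnSn U) (c0P (t, i) U.+1).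
apply: (ideal_pow_sum_mul (a := fun j => c t.+1 j - P U t.+1 j) (fun j => B t j i)) => j _.
exact: c0P (t.+1, j) U.
Qed.

Lemma lincomb_series (n : nat -> nat) (h : nat -> nat -> M) (e : nat -> nat -> R) :
  (forall t j, (j < n t.+1)%N -> lspan (n t) (h t) (h t.+1 j)) ->
  (forall t i, ideal_pow J t (e t i)) ->
  exists w : nat -> M,
    forall t, lspan (n t) (h t) (w t) /\ w t = lincomb (n t) (e t) (h t) + w t.+1.
Proof.
move=> hS Je.
have /choice [B BP] : forall tj : nat * nat, exists row,
    (tj.2 < n tj.1.+1)%N -> h tj.1.+1 tj.2 = lincomb (n tj.1) row (h tj.1).
  move=> [t j]; case: (ltnP j (n t.+1)) => /= [/hS [row ->]|]; first by exists row.
  by exists (fun _ => 0).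
have [c cE] := coef_series n (fun t j i => B (t, j) i) Je.
exists (fun t => lincomb (n t) (c t) (h t)) => t; split; first by exists (c t).
rewrite (eq_lincomb _ (fun i _ => cE t i)) lincombD; congr (_ + _).
by apply: (lincomb_comp (B := fun j => B (t, j))) => j /(BP (t, j)).
Qed.

End CompleteSeries.

Section LinearCompactness.
Variables (R : comNzRingType) (M : lmodType R).
Hypotheses (noethR : noetherian_ring R) (semilocR : semilocal_ring R).
Hypothesis complR : adically_complete (@jacobson_radical R).
Hypothesis fgM : fin_gen_module M.

Local Notation J := (@jacobson_radical R).

Variables (S N : nat -> M -> Prop).
Hypothesis subN : forall k, is_submodule (N k).
Hypothesis S_nonempty : forall k, exists y, S k y.
Hypothesis S_descending : descending S.
Hypothesis S_coset : forall k y0 y, S k y0 -> (S k y <-> N k (y - y0)).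
Variables (ng : nat -> nat) (hg : nat -> nat -> M).
Hypothesis N_gen : forall k x, N k x <-> lspan (ng k) (hg k) x.

Local Notation L p t := (lspan_in (ideal_pow J t) (ng p) (hg p)).

Lemma N_descending : descending N.
Proof.
move=> k z Nz; have [y0 Sy0] := S_nonempty k.+1.
have Syz : S k.+1 (y0 + z) by apply/(S_coset _ Sy0); rewrite addrAC subrr add0r.
by have := (S_coset _ (S_descending Sy0)).1 (S_descending Syz); rewrite addrAC subrr add0r.
Qed.

Lemma lspan_pow_sub p t x : L p t x -> N p x.
Proof. by move=> [c [_ ->]]; apply: lincomb_submod; [exact: subN|exact: fin_gen_sub (N_gen p)]. Qed.

Definition approx t p k y :=
  [/\ (p <= k)%N, S k y & forall k', (k <= k')%N -> exists s, S k' s /\ L p t (y - s)].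

Lemma approx0 : exists y, approx 0 0 0 y.
Proof.
have [y Sy] := S_nonempty 0; exists y; split=> // k' _.
have [s Ss] := S_nonempty k'; exists s; split=> //.
have /N_gen [c ->] : N 0 (y - s).
  by apply/(S_coset _ (descending_le S_descending (leq0n k') Ss)).
by exists c.
Qed.

Lemma approx_step t p k y : approx t p k y ->
  exists K s, [/\ (k < K)%N, approx t.+1 k K s & L p t (s - y)].
Proof.
move=> [le_pk Sky approx_y].
pose Q j := addsm (N (k + j)) (L k t.+1).
have [j0 Qstab] : exists K, forall j, (K <= j)%N -> forall x, Q K x -> Q j x.
  apply: (dcc_between_lspan_pow noethR semilocR fgM (t := t.+1) (subN k) (N_gen k)).
  - by move=> j; apply: addsm_submod => //; apply/lspan_in_submod/ideal_pow_ideal.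
  - move=> j x [a [l [Na [Ll ->]]]]; exists a, l; split=> //.
    by apply: N_descending; rewrite -addnS.
  - move=> j x Lx; exists 0, x; rewrite add0r; split=> //; exact: (subN _).1.
  move=> j _ [a [l [Na [/lspan_pow_sub Nl ->]]]]; case: (subN k) => _ [ND _]; apply: ND => //.
  exact: descending_le N_descending (leq_addr j k) Na.
(* From [K] on, a difference of coset points is corrected by [N k'] up to
   [J^(t+1) N k]. *)
pose K := (k + j0).+1.
have lt_kK : (k < K)%N by rewrite /K ltnS leq_addr.
have [s [SKs Lys]] := approx_y K (ltnW lt_kK).
exists K, s; split=> //; last first.
  by rewrite -opprB; apply: submodN Lys; apply: lspan_in_submod; apply: ideal_pow_ideal.
split=> [|//|k' le_Kk']; first exact: ltnW.
have [s' Ss'] := S_nonempty k'.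
have Nss' : N K (s - s') by apply/(S_coset _ (descending_le S_descending le_Kk' Ss')).
have [a [l [Na [Ll sE]]]] : Q (k' - k)%N (s - s').
  apply: Qstab; first by move: le_Kk'; rewrite /K; lia.
  exists (s - s'), 0; rewrite addr0; split; first exact: N_descending.
  by split=> //; apply: (lspan_in_submod _ _ (ideal_pow_ideal _ _)).1.
rewrite subnKC in Na; last by move: le_Kk'; rewrite /K; lia.
exists (s' + a); split; first by apply/(S_coset _ Ss'); rewrite addrAC subrr add0r.
by rewrite opprD addrA sE addrAC subrr add0r.
Qed.

Lemma nested_cosets_meet_gen : exists y, forall k, S k y.
Proof.
have [y0 approx_y0] := approx0.
pose P t (st : nat * nat * M) := approx t st.1.1 st.1.2 st.2.
pose Rel t (st st' : nat * nat * M) :=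
  [/\ st'.1.1 = st.1.2, (st.1.2 < st'.1.2)%N & L st.1.1 t (st'.2 - st.2)].
have step t st : P t st -> exists st', P t.+1 st' /\ Rel t st st'.
  by case: st => [[p k] y] /approx_step [K [s [lt_kK approx_s Lsy]]]; exists (k, K, s).
have [f [_ fP]] := dependent_choice (P := P) (Rel := Rel) (x0 := (0%N, 0%N, y0)) approx_y0 step.
pose p t := (f t).1.1; pose k t := (f t).1.2; pose y t := (f t).2.
have pS t : p t.+1 = k t by case: (fP t) => _ [].
have le_pk t : (p t <= k t)%N by case: (fP t) => -[].
have le_tp t : (t <= p t.+1)%N.
  rewrite pS; elim: t => // t IH; apply: leq_ltn_trans IH _.
  by case: (fP t) => _ [].
have /choice [e eP] : forall t, exists e, (forall i, ideal_pow J t (e i)) /\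
    y t.+1 - y t = lincomb (ng (p t)) e (hg (p t)).
  by move=> t; case: (fP t) => _ [_ _ [e eP]]; exists e.
have hgS t j : (j < ng (p t.+1))%N -> lspan (ng (p t)) (hg (p t)) (hg (p t.+1) j).
  move=> lt_j; apply/N_gen; apply: descending_le N_descending _ (fin_gen_sub (N_gen _) lt_j).
  by rewrite pS.
have [w wP] := lincomb_series complR hgS (fun t => proj1 (eP t)).
have yE t : y 0%N + w 0%N = y t + w t.
  elim: t => // t ->; case: (wP t) => _ ->; rewrite -(proj2 (eP t)).
  by rewrite addrA (addrC (y t)) subrK.
exists (y 0%N + w 0%N) => k0.
apply: descending_le S_descending (le_tp k0) _.
have Sy : S (p k0.+1) (y k0.+1).
  by case: (fP k0.+1) => -[_ Sky _] _; apply: descending_le S_descending (le_pk _) Sky.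
by apply/(S_coset _ Sy); rewrite (yE k0.+1) addrAC subrr add0r; apply/N_gen; case: (wP k0.+1).
Qed.

End LinearCompactness.

Lemma nested_cosets_meet (R : comNzRingType) (M : lmodType R) (S N : nat -> M -> Prop) :
  noetherian_ring R -> semilocal_ring R -> adically_complete (@jacobson_radical R) ->
  fin_gen_module M -> (forall k, is_submodule (N k)) -> (forall k, exists y, S k y) ->
  descending S -> (forall k y0 y, S k y0 -> (S k y <-> N k (y - y0))) ->
  exists y, forall k, S k y.
Proof.
move=> noethR semilocR complR fgM subN S_nonempty S_desc S_coset.
have /choice [gen genP] : forall k, exists nh : nat * (nat -> M),
    forall x, N k x <-> lspan nh.1 nh.2 x.
  by move=> k; have [n [h Nh]] := noetherian_submod_fin_gen noethR fgM (subN k); exists (n, h).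
exact: (nested_cosets_meet_gen noethR semilocR complR fgM subN S_nonempty S_desc S_coset
  (ng := fun k => (gen k).1) (hg := fun k => (gen k).2) genP).
Qed.

Lemma greedy_seq (P : (nat -> bool) -> nat -> Prop) :
  (forall b b' n, (forall i, (i < n)%N -> b i = b' i) -> P b n -> P b' n) ->
  exists b : nat -> bool, forall n, b n = false <-> P b n.
Proof.
move=> P_local.
pose dec b n := if excluded_middle_informative (P b n) then false else true.
pose fix pre n : nat -> bool :=
  if n is n'.+1 then fun i => if (i < n')%N then pre n' i else dec (pre n') n'
  else fun _ => true.
pose b i := pre i.+1 i.
have preE n i : (i < n)%N -> pre n i = b i.
  elim: n => [//|n IH] lt_in /=; case: ltnP => [/IH //|le_ni].
  have -> : i = n by lia.
  by rewrite /b /= ltnn.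
have preb n : P (pre n) n <-> P b n.
  by split; apply: P_local => i /preE // ->.
exists b => n; rewrite -preb /b /= ltnn /dec.
by case: excluded_middle_informative.
Qed.

Definition dupdate (T : nat -> Type) (c : forall i, T i) k (v : T k) : forall i, T i :=
  fun i => if decP (k =P i) is left e then eq_rect k T v i e else c i.
Arguments dupdate {T} c k v i.

Lemma dupdate_eq (T : nat -> Type) (c : forall i, T i) k v : dupdate c k v k = v.
Proof. by rewrite /dupdate; case: decP => // e; rewrite (eq_irrelevance e erefl). Qed.

Lemma dupdate_neq (T : nat -> Type) (c : forall i, T i) k v i : k <> i -> dupdate c k v i = c i.
Proof. by rewrite /dupdate; case: decP. Qed.

Section Rays.
Variables (R : comNzRingType) (D : Bdiagram R).

Definition mu_image s c (C : Bmod D s -> Prop) : Bmod D (rcons s c) -> Prop :=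
  fun y => exists x, C x /\ mu_rel D s c y x.
Arguments mu_image {s} c C _.

Local Unset Implicit Arguments.
Fixpoint reach (b : nat -> bool) (m : Bmod D [::]) n : Bmod D (ray_vertex b n) -> Prop :=
  match n return Bmod D (ray_vertex b n) -> Prop with
  | 0 => fun x => x = m
  | n'.+1 => mu_image (b n') (reach b m n')
  end.
Local Set Implicit Arguments.

Lemma mu_relP s c a x1 y1 x2 y2 : mu_rel D s c x1 y1 -> mu_rel D s c x2 y2 ->
  mu_rel D s c (a *: x1 + x2) (a *: y1 + y2).
Proof. by case: c x1 x2 => x1 x2 /= -> ->; rewrite linearP. Qed.

Lemma mu_rel0 s c : mu_rel D s c 0 0.
Proof. by case: c => /=; rewrite linear0. Qed.

Lemma mu_image_Omega_nonempty s (C : Bmod D s -> Prop) :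
  (exists x, C x) -> exists y, mu_image true C y.
Proof. by move=> [x Cx]; exists (BOmega D s x), x. Qed.

Lemma mu_image_Omega0 s (C : Bmod D s -> Prop) :
  mu_image true C 0 <-> exists x, C x /\ ker_Omega D s x.
Proof. by split=> -[x [Cx Ox]]; exists x; split. Qed.

Lemma mu_image_Mho_nonempty s (C : Bmod D s -> Prop) :
  (exists x, C x /\ im_Mho D s x) -> exists y, mu_image false C y.
Proof. by move=> [x [Cx [z zx]]]; exists z, x; split=> //=; rewrite zx. Qed.

Lemma mu_image_Mho0 s (C : Bmod D s -> Prop) : mu_image false C 0 -> C 0.
Proof. by move=> [x [Cx /= xE]]; rewrite xE linear0 in Cx. Qed.

Lemma reach_chain b m n x : reach b m n x ->
  exists c : forall i, Bmod D (ray_vertex b i), [/\ c 0%N = m, c n = x &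
    forall i, (i < n)%N -> mu_rel D (ray_vertex b i) (b i) (c i.+1) (c i)].
Proof.
elim: n x => [|n IH] x /=.
  by move=> ->; exists (dupdate (T := fun i => Bmod D (ray_vertex b i)) (fun=> 0) 0%N m);
    rewrite dupdate_eq.
move=> [y [/IH [c [c0 cn cP]] xy]]; exists (dupdate c n.+1 x).
split; [by rewrite dupdate_neq|exact: dupdate_eq|move=> i lt_in1].
case: (ltnP i n) => [lt_in|le_ni].
  by rewrite !dupdate_neq; [apply: cP| |]; lia.
have -> : i = n by lia.
by rewrite dupdate_eq dupdate_neq ?cn //; lia.
Qed.

Lemma chain_reach b m n (c : forall i, Bmod D (ray_vertex b i)) :
  c 0%N = m -> (forall i, (i < n)%N -> mu_rel D (ray_vertex b i) (b i) (c i.+1) (c i)) ->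
  reach b m n (c n).
Proof.
move=> c0 cP; elim: n cP => // n IH cP.
by exists (c n); split; [apply: IH => i /ltnW; apply: cP|apply: cP].
Qed.

Lemma mu_le_reach b m n (S : Bmod D (ray_vertex b n) -> Prop) :
  mu_le D b n S m <-> exists x, reach b m n x /\ S x.
Proof.
split=> [[c [c0 [Sc cP]]]|[x [/reach_chain [c [c0 cn cP]] Sx]]].
  by exists (c n); split=> //; apply: chain_reach.
by exists c; rewrite cn.
Qed.

(* Pairing the reached set with its vertex turns its dependence on [b] into an
   equation of dependent pairs, with no casts between fibres of [Bmod D]. *)
Definition reached b m n : {s : seq bool & Bmod D s -> Prop} :=
  existT (fun s => Bmod D s -> Prop) (ray_vertex b n) (reach b m n).

Lemma reach_local b b' m n : (forall i, (i < n)%N -> b i = b' i) -> reached b m n = reached b' m n.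
Proof.
elim: n => // n IH bb'.
pose step (p : {s : seq bool & Bmod D s -> Prop}) c :=
  existT (fun s => Bmod D s -> Prop) (rcons (projT1 p) c) (mu_image c (projT2 p)).
change (step (reached b m n) (b n) = step (reached b' m n) (b' n)).
by rewrite IH ?bb' // => i /ltnW; apply: bb'.
Qed.

Lemma greedy_ray m : exists b : nat -> bool, forall n,
  b n = false <-> exists x, reach b m n x /\ im_Mho D (ray_vertex b n) x.
Proof.
pose im_reached (p : {s : seq bool & Bmod D s -> Prop}) :=
  exists x, projT2 p x /\ im_Mho D (projT1 p) x.
apply: (greedy_seq (P := fun b n => im_reached (reached b m n))).
by move=> b b' n /(reach_local m) ->.
Qed.

Definition extends b i (x : Bmod D (ray_vertex b i)) k :=
  exists c : forall j, Bmod D (ray_vertex b j), c i = x /\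
    forall j, (i <= j)%N -> (j < i + k)%N -> mu_rel D (ray_vertex b j) (b j) (c j.+1) (c j).
Arguments extends b i x k : clear implicits.

Lemma extends0 b i k : extends b i 0 k.
Proof. by exists (fun _ => 0); split=> // j _ _; apply: mu_rel0. Qed.

Lemma extendsP b i k a x1 x2 :
  extends b i x1 k -> extends b i x2 k -> extends b i (a *: x1 + x2) k.
Proof.
move=> [c1 [<- c1P]] [c2 [<- c2P]]; exists (fun j => a *: c1 j + c2 j); split=> // j le_ij lt_j.
by apply: mu_relP; [apply: c1P|apply: c2P].
Qed.

Section GreedyRay.
Variables (b : nat -> bool) (m : Bmod D [::]).
Hypothesis greedy : forall n,
  b n = false <-> exists x, reach b m n x /\ im_Mho D (ray_vertex b n) x.

Lemma greedy_reach_zero n : (exists x, reach b m n x /\ ker_Omega D (ray_vertex b n) x) ->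
  ~ (exists x, reach b m n x /\ im_Mho D (ray_vertex b n) x) -> reach b m n.+1 0.
Proof.
move=> kerx no_im; have : b n = true by case E: (b n) => //; case: no_im; apply/greedy.
by rewrite /=; case: (b n) => // _; apply/mu_image_Omega0.
Qed.

Lemma greedy_reach_nonzero : m != 0 ->
  (forall n, (exists x, reach b m n x /\ ker_Omega D (ray_vertex b n) x) ->
     exists x, reach b m n x /\ im_Mho D (ray_vertex b n) x) ->
  forall n, (exists x, reach b m n x) /\ ~ reach b m n 0.
Proof.
move=> m_neq0 ker_im; elim=> [|n [ne_n nz_n]].
  by split=> [|/= m0]; [exists m|rewrite -m0 eqxx in m_neq0].
move: (greedy n) (ker_im n) => /=; case: (b n) => [bn_false|bn_false _].
- move=> ker_im_n; split; first exact: mu_image_Omega_nonempty.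
  by move=> /mu_image_Omega0 /ker_im_n /bn_false.
- by split; [apply: mu_image_Mho_nonempty; apply/bn_false|move=> /mu_image_Mho0].
Qed.

End GreedyRay.

Section Compactness.
Hypotheses (noethR : noetherian_ring R) (semilocR : semilocal_ring R).
Hypothesis complR : adically_complete (@jacobson_radical R).
Hypothesis fgD : forall s, fin_gen_module (Bmod D s).

Lemma extendable_step b i (x : Bmod D (ray_vertex b i)) : (forall k, extends b i x k) ->
  exists y, mu_rel D (ray_vertex b i) (b i) y x /\ forall k, extends b i.+1 y k.
Proof.
move=> ext_x.
pose S k y := mu_rel D (ray_vertex b i) (b i) y x /\ extends b i.+1 y k.
pose N k z := mu_rel D (ray_vertex b i) (b i) z 0 /\ extends b i.+1 z k.
suff [y yP] : exists y, forall k, S k y.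
  by exists y; split=> [|k]; [case: (yP 0%N)|case: (yP k)].
apply: (nested_cosets_meet (N := N) noethR semilocR complR (fgD _)).
- move=> k; apply: submod_lin => [|a z1 z2 [r1 e1] [r2 e2]].
    by split; [apply: mu_rel0|apply: extends0].
  split; last exact: extendsP.
  by have := mu_relP a r1 r2; rewrite scaler0 addr0.
- move=> k; have [c [ci cP]] := ext_x k.+1; exists (c i.+1); split.
    by rewrite -ci; apply: cP; lia.
  by exists c; split=> // j le_ij lt_j; apply: cP; lia.
- by move=> k y [r [c [ci cP]]]; split=> //; exists c; split=> // j le_ij lt_j; apply: cP; lia.
move=> k y0 y [r0 e0]; split=> [[r e]|[r e]].
  split; first by have := mu_relP (-1) r0 r; rewrite !scaleN1r addNr addrC.
  by have := extendsP (-1) e0 e; rewrite scaleN1r addrC.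
have := mu_relP 1 r r0; have := extendsP 1 e e0; rewrite !scale1r subrK add0r.
by split.
Qed.

Lemma infinite_chain b m : (forall n, exists x, reach b m n x) ->
  exists ms : forall i, Bmod D (ray_vertex b i),
    ms 0%N = m /\ forall i, mu_rel D (ray_vertex b i) (b i) (ms i.+1) (ms i).
Proof.
move=> reach_nonempty.
have ext_m k : extends b 0 m k.
  have [x /reach_chain [c [c0 _ cP]]] := reach_nonempty k.
  by exists c; split=> // j _; apply: cP.
have step i (x : Bmod D (ray_vertex b i)) : (forall k, extends b i x k) -> exists y,
    (forall k, extends b i.+1 y k) /\ mu_rel D (ray_vertex b i) (b i) y x.
  by move=> /extendable_step [y [r e]]; exists y.
have [ms [ms0 msP]] := dependent_choice (P := fun i x => forall k, extends b i x k)
  (Rel := fun i x y => mu_rel D (ray_vertex b i) (b i) y x) ext_m step.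
by exists ms; split=> // i; case: (msP i).
Qed.

End Compactness.
End Rays.

Arguments reach {R D} b m n _.

Theorem theorem5p17 (R : comNzRingType)
  (HR_noeth : noetherian_ring R) (HR_semiloc : semilocal_ring R)
  (HR_compl : adically_complete (@jacobson_radical R))
  (D : Bdiagram R)
  (Hfg : forall s, fin_gen_module (Bmod D s))
  (Himker : forall s (y : Bmod D (rcons s false)), BOmega D s (BMho D s y) = 0)
  (m : Bmod D [::]) (Hm : m != 0) :
  exists b : nat -> bool,
    let P1 := exists j : nat,
        mu_le D b j (ker_Omega D (ray_vertex b j)) m /\
        ~ mu_le D b j (im_Mho D (ray_vertex b j)) m in
    let P2 := (exists ms : forall i, Bmod D (ray_vertex b i),
                  ms 0%N = m /\
                  forall i, mu_rel D (ray_vertex b i) (b i) (ms i.+1) (ms i)) /\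
              ~ (exists i : nat, mu_le D b i (zero_set D (ray_vertex b i)) m) in
    (P1 /\ ~ P2) \/ (~ P1 /\ P2).
Proof.
have [b greedy] := greedy_ray m.
exists b => P1 P2.
case: (classic P1) => [p1|np1]; [left|right]; split=> //.
  move: p1 => [j [/mu_le_reach kerj /mu_le_reach no_imj]] [_]; apply.
  by exists j.+1; apply/mu_le_reach; exists 0; split=> //; apply: greedy_reach_zero.
have ker_im n : (exists x, reach b m n x /\ ker_Omega D (ray_vertex b n) x) ->
    exists x, reach b m n x /\ im_Mho D (ray_vertex b n) x.
  move=> kern; apply: NNPP => no_imn; apply: np1.
  by exists n; split; [apply/mu_le_reach|move/mu_le_reach].
have reachP := greedy_reach_nonzero greedy Hm ker_im.
split; first by apply: (infinite_chain HR_noeth HR_semiloc HR_compl Hfg) => n; case: (reachP n).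
by move=> [i /mu_le_reach [x [reach_x x0]]]; case: (reachP i) => _; rewrite -x0.
Qed.
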